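(* Let $R_1,R_2$ be discrete valuation domains with maximal ideals $P_1=R_1p_1$ and $P_2=R_2p_2$, let $\overline{R}$ be a field, $\mathcal{V}_i:R_i\to\overline{R}$ surjective ring homomorphisms with $\ker\mathcal{V}_i=P_i$, and $R=\{(r_1,r_2)\in R_1\times R_2:\mathcal{V}_1(r_1)=\mathcal{V}_2(r_2)\}$. Let $M$ be a non-separated $R$-module and let $0\to K\xrightarrow{i}S\xrightarrow{\varphi}M\to0$ be a separated representation of $M$. Then $M$ is a pseudo-absorbing primary multiplication $R$-module if and only if $S$ is a pseudo-absorbing primary multiplication $R$-module.
   Context: $R$ is local with maximal ideal $P=P_1\oplus P_2=\{(a,b):a\in P_1,b\in P_2\}$. For an $R$-module $S$, $P_1S$ means $(P_1\oplus 0)S$ with $P_1\oplus0=\{(a,0):a\in P_1\}$, and $P_2S$ means $(0\oplus P_2)S$ with $0\oplus P_2=\{(0,b):b\in P_2\}$. An $R$-module $S$ is separated if $P_1S\cap P_2S=0$. A separated representation of an $R$-module $M$ is a surjective $R$-homomorphism $\varphi:S\to M$ with $S$ separated such that whenever $\varphi$ factors as $S\xrightarrow{f}S'\to M$ with $S'$ a separated $R$-module, $f$ is injective; $K=\ker\varphi$ and $i$ is the inclusion. A proper ideal $I$ of a commutative ring is 2-absorbing primary if whenever $abc\in I$ then $ab\in I$ or $ac\in\sqrt I$ or $bc\in\sqrt I$. A proper submodule $N$ of an $R$-module $M$ is pseudo-absorbing primary if $(N:_RM)=\{r\in R:rM\subseteq N\}$ is a 2-absorbing primary ideal of $R$. $M$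 is a pseudo-absorbing primary multiplication module if for every pseudo-absorbing primary submodule $N$ of $M$ there is an ideal $I$ of $R$ with $N=IM$. *)

From HB Require Import structures.
From mathcomp Require Import all_boot all_order all_algebra.
Set Implicit Arguments. Unset Strict Implicit. Unset Printing Implicit Defensive.
Import Order.TTheory GRing.Theory.
Local Open Scope ring_scope.

Section Ideals.
Variable A : comNzRingType.

Definition is_ideal (I : A -> Prop) : Prop :=
  [/\ I 0, (forall x y, I x -> I y -> I (x + y)) & (forall r x, I x -> I (r * x))].

Definition proper_ideal (I : A -> Prop) : Prop := is_ideal I /\ ~ I 1.

Definition principal_ideal (a : A) : A -> Prop := fun x => exists r, x = r * a.

Definition rad (I : A -> Prop) : A -> Prop := fun x => exists n : nat, I (x ^+ n).

Definition two_absorbing_primary (I : A -> Prop) : Prop :=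
  proper_ideal I /\
  forall a b c, I (a * b * c) -> [\/ I (a * b), rad I (a * c) | rad I (b * c)].

Definition is_PID : Prop :=
  forall I : A -> Prop, is_ideal I -> exists a, forall x, I x <-> principal_ideal a x.

End Ideals.

Section Units.
Variable A : comUnitRingType.
Definition is_local : Prop :=
  forall x y : A, x \isn't a GRing.unit -> y \isn't a GRing.unit ->
    (x + y) \isn't a GRing.unit.

Definition not_field : Prop := exists x : A, x != 0 /\ x \isn't a GRing.unit.
End Units.

Definition is_DVR (A : idomainType) : Prop :=
  [/\ is_PID A, is_local A & not_field A].

Section Pullback.
Variables (R1 R2 : comNzRingType) (F : fieldType)
          (V1 : {rmorphism R1 -> F}) (V2 : {rmorphism R2 -> F}).

Definition pb_pred : pred (R1 * R2)%type := fun x => V1 x.1 == V2 x.2.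

Lemma pb_subring_closed : subring_closed pb_pred.
Proof.
split; rewrite /pb_pred /=.
- by apply/eqP; rewrite (rmorph1 V1) (rmorph1 V2).
- move=> [x1 x2] [y1 y2] /= /eqP Hx /eqP Hy.
  by apply/eqP; rewrite (rmorphB V1) (rmorphB V2) Hx Hy.
- move=> [x1 x2] [y1 y2] /= /eqP Hx /eqP Hy.
  by apply/eqP; rewrite (rmorphM V1) (rmorphM V2) Hx Hy.
Qed.

HB.instance Definition _ := GRing.isSubringClosed.Build _ pb_pred pb_subring_closed.

Record pullback := Pullback { pbval :> (R1 * R2)%type; pbvalP : pb_pred pbval }.

HB.instance Definition _ := [isSub for pbval].
HB.instance Definition _ := [Choice of pullback by <:].
HB.instance Definition _ := [SubChoice_isSubComNzRing of pullback by <:].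

End Pullback.

Section Modules.
Variables (R1 R2 : comNzRingType) (F : fieldType)
          (V1 : {rmorphism R1 -> F}) (V2 : {rmorphism R2 -> F}).
Local Notation R := (pullback V1 V2).

(* P1 (+) 0 = {(a,0) : a in P1} and 0 (+) P2 = {(0,b) : b in P2}, as subsets of R,
   where P_i = ker V_i. *)
Definition P1_0 : R -> Prop := fun x => (pbval x).2 = 0 /\ V1 (pbval x).1 = 0.
Definition O_P2 : R -> Prop := fun x => (pbval x).1 = 0 /\ V2 (pbval x).2 = 0.

Section OneModule.
Variable M : lmodType R.

Definition is_submodule (N : M -> Prop) : Prop :=
  [/\ N 0, (forall x y, N x -> N y -> N (x + y)) & (forall (r : R) x, N x -> N (r *: x))].

Definition proper_submodule (N : M -> Prop) : Prop :=
  is_submodule N /\ exists m, ~ N m.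

Definition ideal_mul (I : R -> Prop) : M -> Prop :=
  fun m => exists (n : nat) (r : 'I_n -> R) (x : 'I_n -> M),
    (forall k, I (r k)) /\ m = \sum_(k < n) r k *: x k.

Definition colon (N : M -> Prop) : R -> Prop := fun r => forall m, N (r *: m).

Definition separated : Prop :=
  forall m, ideal_mul P1_0 m -> ideal_mul O_P2 m -> m = 0.

Definition pseudo_absorbing_primary (N : M -> Prop) : Prop :=
  proper_submodule N /\ two_absorbing_primary (colon N).

Definition pap_multiplication : Prop :=
  forall N : M -> Prop, pseudo_absorbing_primary N ->
    exists I : R -> Prop, is_ideal I /\ forall m, N m <-> ideal_mul I m.

End OneModule.

Definition separated_representation (S M : lmodType R) (phi : {linear S -> M}) : Prop :=
  [/\ separated S,
      (forall m : M, exists s : S, phi s = m) &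
      forall (S' : lmodType R) (f : {linear S -> S'}) (g : {linear S' -> M}),
        separated S' -> (forall s, phi s = g (f s)) -> injective f].

End Modules.

From HB Require Import structures.
From mathcomp Require Import all_boot all_order all_algebra ring.
From Stdlib Require Import Classical ClassicalEpsilon FunctionalExtensionality PropExtensionality.
Import GRing.Theory.
Local Open Scope ring_scope.
Set Implicit Arguments. Unset Strict Implicit. Unset Printing Implicit Defensive.

(* Every proper ideal I of R is 2-absorbing primary. Indeed R is local with
   maximal ideal P = P1 (+) P2, and in a DVR every nonunit has a power in any
   nonzero principal ideal; so rad I = P as soon as I has an element with both
   coordinates nonzero, rad I contains P1 (+) 0 or 0 (+) P2 when I lies on one
   axis, and I = 0 is 2-absorbing because R1 and R2 are domains. Hence the
   pseudo-absorbing primary submodules are just the proper submodules, and the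
   pseudo-absorbing primary multiplication modules are exactly the cyclic ones:
   in a non-cyclic such X every line R m is I X with I inside P, which forces
   X = P X and then m in P m, i.e. X = 0.
   Cyclicity passes from S to M through the surjection phi. Conversely, the
   minimality of phi, applied to quotients S / R v of S, shows that its kernel K
   meets P1 S and P2 S trivially, so P K = 0, and that K lies in P1 S - P2 S;
   therefore a lift of a generator of M generates S. *)

Section DiscreteValuation.
Variables (A : idomainType) (p : A).
Hypotheses (A_PID : is_PID A) (A_not_field : not_field A)
  (nonunitP : forall x : A, x \isn't a GRing.unit <-> principal_ideal p x).

Lemma uniformizer_nonunit : p \isn't a GRing.unit.
Proof. by apply/nonunitP; exists 1; rewrite mul1r. Qed.

Lemma uniformizer_neq0 : p != 0.
Proof.
have [x [x0 /nonunitP [r xE]]] := A_not_field.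
by apply: contraNneq x0 => p0; rewrite xE p0 mulr0.
Qed.

(* The saturation J of (x) under p is principal, J = (a); if x lay in every
   (p^(n+1)), then a p^n = t x = t s a p^(n+1) would make p a unit. *)
Lemma krull_intersection (x : A) :
  x != 0 -> exists n, ~ principal_ideal (p ^+ n.+1) x.
Proof.
move=> x0; apply: NNPP => nodvd.
have dvd n : principal_ideal (p ^+ n.+1) x.
  by apply: NNPP => h; apply: nodvd; exists n.
pose J z := exists n t, z * p ^+ n = t * x.
have J_ideal : is_ideal J.
  split.
  - by exists 0%N, 0; rewrite !mul0r.
  - move=> z1 z2 [n1 [t1 e1]] [n2 [t2 e2]].
    exists (n1 + n2)%N, (t1 * p ^+ n2 + t2 * p ^+ n1).
    have -> : (z1 + z2) * p ^+ (n1 + n2)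
            = z1 * p ^+ n1 * p ^+ n2 + z2 * p ^+ n2 * p ^+ n1 by rewrite exprD; ring.
    by rewrite e1 e2; ring.
  - by move=> r z [n [t e]]; exists n, (r * t); rewrite -!mulrA e.
have [a Ja] := A_PID J_ideal.
have [n [t et]] : J a by apply/Ja; exists 1; rewrite mul1r.
have [w ew] := dvd n.
have [s es] : principal_ideal a w by apply/Ja; exists n.+1, 1; rewrite mul1r ew.
have a0 : a != 0.
  have [r xE] : principal_ideal a x by apply/Ja; exists 0%N, 1; rewrite mulr1 mul1r.
  by apply: contraNneq x0 => a0; rewrite xE a0 mulr0.
have : a * p ^+ n * (1 - p * (t * s)) = 0.
  have -> : a * p ^+ n * (1 - p * (t * s)) = a * p ^+ n - t * (s * a * p ^+ n.+1).
    by rewrite exprS; ring.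
  by rewrite -es -ew -et subrr.
move/eqP; rewrite !mulf_eq0 expf_eq0 (negbTE a0) (negbTE uniformizer_neq0) andbF subr_eq0.
move=> /eqP e; case/negP: uniformizer_nonunit; apply/unitrPr; exists (t * s).
by rewrite -e.
Qed.

Lemma unit_mul_uniformizer_pow (x : A) :
  x != 0 -> exists k u, u \is a GRing.unit /\ x = u * p ^+ k.
Proof.
move=> /krull_intersection [n]; elim: n => [|n IHn] nodvd.
  exists 0%N, x; split; last by rewrite mulr1.
  by apply: contra_notT nodvd => /nonunitP [r ->]; exists r.
have [[u eu] | ] := classic (principal_ideal (p ^+ n.+1) x); last exact: IHn.
exists n.+1, u; split => //.
apply: contra_notT nodvd => /nonunitP [v ev].
by exists v; rewrite eu ev -mulrA -exprS.
Qed.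

Lemma nonunit_pow_dvd (x y : A) :
  x != 0 -> y \isn't a GRing.unit -> exists n t, y ^+ n = t * x.
Proof.
move=> /unit_mul_uniformizer_pow [k [u [u_unit ->]]] /nonunitP [z ->].
by exists k, (z ^+ k * u^-1); rewrite exprMn -mulrA (mulrA u^-1) mulVr ?mul1r.
Qed.

Variables (F : fieldType) (V : {rmorphism A -> F}).
Hypothesis kerV : forall x : A, V x = 0 <-> principal_ideal p x.

Lemma unit_of_residue_neq0 (x : A) : V x != 0 -> x \is a GRing.unit.
Proof. by apply: contraNT => /nonunitP /kerV ->. Qed.

Lemma residue_eq0_pow_dvd (x y : A) :
  x != 0 -> V y = 0 -> exists n t, y ^+ n = t * x.
Proof. by move=> x0 /kerV /nonunitP; apply: nonunit_pow_dvd. Qed.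

End DiscreteValuation.

Section QuotientModule.
Variables (R : pzRingType) (V : lmodType R) (L : V -> Prop).
Hypothesis L_closed : [/\ L 0, (forall x y, L x -> L y -> L (x + y))
  & (forall (r : R) x, L x -> L (r *: x))].

Let L0 : L 0 := let: And3 h _ _ := L_closed in h.
Let LD : forall x y, L x -> L y -> L (x + y) := let: And3 _ h _ := L_closed in h.
Let LZ : forall (r : R) x, L x -> L (r *: x) := let: And3 _ _ h := L_closed in h.

Lemma submodN x : L x -> L (- x).
Proof. by rewrite -scaleN1r; apply: LZ. Qed.

Lemma submodB x y : L x -> L y -> L (x - y).
Proof. by move=> Lx Ly; apply/LD/submodN. Qed.

Definition qrep (x : V) : V := epsilon (inhabits 0) (fun y => L (x - y)).

Lemma qrepP x : L (x - qrep x).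
Proof.
by apply: (epsilon_spec (inhabits 0) (fun y => L (x - y))); exists x; rewrite subrr; apply: L0.
Qed.

Lemma qrep_eq x y : L (x - y) -> qrep x = qrep y.
Proof.
move=> Lxy; congr (epsilon _ _); apply: functional_extensionality => z.
apply: propositional_extensionality; split => Lz.
- have -> : y - z = (x - z) - (x - y) by rewrite opprB [RHS]addrC addrA subrK.
  exact: submodB.
- have -> : x - z = (x - y) + (y - z) by rewrite addrA subrK.
  exact: LD.
Qed.

Lemma qrepK x : qrep (qrep x) = qrep x.
Proof. by apply: qrep_eq; rewrite -opprB; apply/submodN/qrepP. Qed.

(* Mentioning [L_closed] makes the type, hence its canonical instances,
   depend on the closure proof. *)
Definition quot : Type := let _ := L_closed in {x : V | qrep x == x}.
HB.instance Definition _ := Choice.on quot.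

Definition qproj (x : V) : quot := exist _ (qrep x) (introT eqP (qrepK x)).

Lemma qprojK (q : quot) : qproj (sval q) = q.
Proof. by case: q => x qx; apply: val_inj => /=; apply/eqP. Qed.

Lemma qproj_eq x y : qproj x = qproj y <-> L (x - y).
Proof.
split=> [/(congr1 sval) /= e | /qrep_eq e]; last by apply: val_inj.
have -> : x - y = (x - qrep x) - (y - qrep y) by rewrite e opprB addrA subrK.
by apply: submodB; apply: qrepP.
Qed.

Lemma qind (P : quot -> Prop) : (forall x, P (qproj x)) -> forall q, P q.
Proof. by move=> Pproj q; rewrite -(qprojK q). Qed.

Definition qadd (a b : quot) : quot := qproj (sval a + sval b).
Definition qopp (a : quot) : quot := qproj (- sval a).
Definition qscale (r : R) (a : quot) : quot := qproj (r *: sval a).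

Lemma qaddE x y : qadd (qproj x) (qproj y) = qproj (x + y).
Proof.
apply/qproj_eq => /=.
have -> : qrep x + qrep y - (x + y) = - ((x - qrep x) + (y - qrep y)).
  by rewrite !opprD !opprK addrACA [- x + _]addrC [- y + _]addrC.
by apply/submodN/LD; apply: qrepP.
Qed.

Lemma qoppE x : qopp (qproj x) = qproj (- x).
Proof. by apply/qproj_eq => /=; rewrite opprK addrC; apply: qrepP. Qed.

Lemma qscaleE r x : qscale r (qproj x) = qproj (r *: x).
Proof.
apply/qproj_eq => /=; rewrite -scalerBr -[qrep x - x]opprB.
by apply/LZ/submodN/qrepP.
Qed.

Lemma qaddA : associative qadd.
Proof. by elim/qind => x; elim/qind => y; elim/qind => z; rewrite !qaddE addrA. Qed.

Lemma qaddC : commutative qadd.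
Proof. by elim/qind => x; elim/qind => y; rewrite !qaddE addrC. Qed.

Lemma qadd0 : left_id (qproj 0) qadd.
Proof. by elim/qind => x; rewrite qaddE add0r. Qed.

Lemma qaddN : left_inverse (qproj 0) qopp qadd.
Proof. by elim/qind => x; rewrite qoppE qaddE addNr. Qed.

HB.instance Definition _ := GRing.isZmodule.Build quot qaddA qaddC qadd0 qaddN.

Lemma qscaleA a b v : qscale a (qscale b v) = qscale (a * b) v.
Proof. by elim/qind: v => x; rewrite !qscaleE scalerA. Qed.

Lemma qscale1 : left_id 1 qscale.
Proof. by elim/qind => x; rewrite qscaleE scale1r. Qed.

Lemma qscaleDr : right_distributive qscale qadd.
Proof.
by move=> a; elim/qind => x; elim/qind => y; rewrite !(qaddE, qscaleE) scalerDr.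
Qed.

Lemma qscaleDl v : {morph qscale^~ v : a b / a + b >-> qadd a b}.
Proof. by elim/qind: v => x a b; rewrite !(qaddE, qscaleE) scalerDl. Qed.

HB.instance Definition _ :=
  GRing.Zmodule_isLmodule.Build R quot qscaleA qscale1 qscaleDr qscaleDl.

Lemma qproj_linear : linear qproj.
Proof. by move=> a x y; rewrite /GRing.scale /= /GRing.add /= qscaleE qaddE. Qed.

HB.instance Definition _ := GRing.isLinear.Build R V quot *:%R qproj qproj_linear.

End QuotientModule.

Lemma mulf3_eq0 (A : idomainType) (u v w : A) :
  u * v * w = 0 -> u * w = 0 \/ v * w = 0.
Proof.
by move/eqP; rewrite !mulf_eq0 => /orP[/orP[] | ] /eqP ->;
  rewrite ?mul0r ?mulr0; [left | right | left].
Qed.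

Section Pullback.
Variables (R1 R2 : idomainType) (F : fieldType) (p1 : R1) (p2 : R2)
  (V1 : {rmorphism R1 -> F}) (V2 : {rmorphism R2 -> F}).
Hypotheses (R1_PID : is_PID R1) (R2_PID : is_PID R2)
  (R1_not_field : not_field R1) (R2_not_field : not_field R2)
  (nonunit1P : forall x : R1, x \isn't a GRing.unit <-> principal_ideal p1 x)
  (nonunit2P : forall x : R2, x \isn't a GRing.unit <-> principal_ideal p2 x)
  (kerV1 : forall x : R1, V1 x = 0 <-> principal_ideal p1 x)
  (kerV2 : forall x : R2, V2 x = 0 <-> principal_ideal p2 x).
Local Notation R := (pullback V1 V2).
Local Notation P1S := (ideal_mul (@P1_0 _ _ _ V1 V2)).
Local Notation P2S := (ideal_mul (@O_P2 _ _ _ V1 V2)).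

Lemma pbvalE (r : R) : V1 (pbval r).1 = V2 (pbval r).2.
Proof. exact/eqP/(pbvalP r). Qed.

Definition pbpair (x1 : R1) (x2 : R2) (e : V1 x1 = V2 x2) : R :=
  Pullback (introT eqP e : pb_pred V1 V2 (x1, x2)).

Lemma pb_ext (a b : R) :
  (pbval a).1 = (pbval b).1 -> (pbval a).2 = (pbval b).2 -> a = b.
Proof.
move=> e1 e2; apply: val_inj; move: e1 e2 => /=.
by case: (pbval a) => ? ?; case: (pbval b) => ? ? /= -> ->.
Qed.

Lemma pbvalX (y : R) n : pbval (y ^+ n) = ((pbval y).1 ^+ n, (pbval y).2 ^+ n).
Proof. by elim: n => [|n IHn]; rewrite ?expr0 // !exprS /= IHn. Qed.

(* The maximal ideal P = P1 (+) P2 of R: the kernel of R -> F. *)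
Definition Pmax (r : R) : Prop := V1 (pbval r).1 = 0.

Lemma Pmax0 : Pmax 0.
Proof. exact: rmorph0. Qed.

Lemma Pmax_not1 : ~ Pmax 1.
Proof. by rewrite /Pmax /= rmorph1 => /eqP; rewrite oner_eq0. Qed.

Lemma PmaxD r s : Pmax r -> Pmax s -> Pmax (r + s).
Proof. by rewrite /Pmax /= rmorphD => -> ->; rewrite addr0. Qed.

Lemma PmaxMr r s : Pmax r -> Pmax (r * s).
Proof. by rewrite /Pmax /= rmorphM => ->; rewrite mul0r. Qed.

Lemma not_Pmax_inv (c : R) : ~ Pmax c -> exists d : R, d * c = 1.
Proof.
move/eqP => c1; have c2 : V2 (pbval c).2 != 0 by rewrite -pbvalE.
have u1 := unit_of_residue_neq0 nonunit1P kerV1 c1.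
have u2 := unit_of_residue_neq0 nonunit2P kerV2 c2.
have e : V1 (pbval c).1^-1 = V2 (pbval c).2^-1 by rewrite !rmorphV // pbvalE.
by exists (pbpair e); apply: pb_ext; apply: mulVr.
Qed.

Lemma proper_ideal_sub_Pmax (I : R -> Prop) x : proper_ideal I -> I x -> Pmax x.
Proof.
move=> [[_ _ IM] I1] Ix; apply: NNPP => /not_Pmax_inv [d dx].
by apply: I1; rewrite -dx; apply: IM.
Qed.

Lemma P1_0_Pmax (r : R) : P1_0 r -> Pmax r.
Proof. by case. Qed.

Lemma O_P2_Pmax (r : R) : O_P2 r -> Pmax r.
Proof. by case=> r1 _; rewrite /Pmax r1 rmorph0. Qed.

Lemma P1_0M (c r : R) : P1_0 r -> P1_0 (c * r).
Proof. by case=> r2 r1; split; rewrite /= ?r2 ?mulr0 // rmorphM r1 mulr0. Qed.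

Lemma O_P2M (c r : R) : O_P2 r -> O_P2 (c * r).
Proof. by case=> r1 r2; split; rewrite /= ?r1 ?mulr0 // rmorphM r2 mulr0. Qed.

Lemma Pmax_split (r : R) : Pmax r -> exists r1 r2, [/\ P1_0 r1, O_P2 r2 & r = r1 + r2].
Proof.
move=> Pr; have e1 : V1 (pbval r).1 = V2 0 by rewrite Pr rmorph0.
have e2 : V1 0 = V2 (pbval r).2 by rewrite rmorph0 -pbvalE.
exists (pbpair e1), (pbpair e2); split => //.
- by split => //=; rewrite -pbvalE.
- by apply: pb_ext; rewrite /= ?addr0 ?add0r.
Qed.

Lemma pb_mul3_eq0 (a b c : R) :
  a * b * c = 0 -> [\/ a * b = 0, a * c = 0 | b * c = 0].
Proof.
have mul_eq0 (u v : R) : (pbval u).1 * (pbval v).1 = 0 ->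
    (pbval u).2 * (pbval v).2 = 0 -> u * v = 0.
  by move=> *; apply: pb_ext.
move=> /(congr1 val) [] /eqP; rewrite !mulf_eq0 -!orbA => /or3P[] /eqP e1 /eqP;
  rewrite !mulf_eq0 -!orbA => /or3P[] /eqP e2;
  first [ by apply/Or31/mul_eq0; rewrite ?e1 ?e2 ?mulr0 ?mul0r
        | by apply/Or32/mul_eq0; rewrite ?e1 ?e2 ?mulr0 ?mul0r
        | by apply/Or33/mul_eq0; rewrite ?e1 ?e2 ?mulr0 ?mul0r ].
Qed.

Section Radical.
Variable I : R -> Prop.
Hypothesis I_ideal : is_ideal I.

Lemma rad_pow_dvd x y r n : I x -> y ^+ n = r * x -> rad I y.
Proof. by have [_ _ IM] := I_ideal; move=> Ix e; exists n; rewrite e; apply: IM. Qed.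

(* With y1^n = t x1, we get y^(n+1) = (y1 t, 0) x, and (y1 t, 0) lies in R
   because y1 t is in P1. *)
Lemma rad_snd_eq0 x y : I x -> (pbval x).1 != 0 -> (pbval y).2 = 0 -> rad I y.
Proof.
move=> Ix x1 y2; have Vy1 : V1 (pbval y).1 = 0 by rewrite pbvalE y2 rmorph0.
have [n [t ey]] := residue_eq0_pow_dvd R1_PID R1_not_field nonunit1P kerV1 x1 Vy1.
have e : V1 ((pbval y).1 * t) = V2 0 by rewrite rmorphM Vy1 mul0r rmorph0.
apply: (@rad_pow_dvd x y (pbpair e) n.+1 Ix); apply: pb_ext; rewrite pbvalX /=.
- by rewrite exprS ey mulrA.
- by rewrite y2 expr0n !mul0r.
Qed.

Lemma rad_fst_eq0 x y : I x -> (pbval x).2 != 0 -> (pbval y).1 = 0 -> rad I y.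
Proof.
move=> Ix x2 y1; have Vy2 : V2 (pbval y).2 = 0 by rewrite -pbvalE y1 rmorph0.
have [n [t ey]] := residue_eq0_pow_dvd R2_PID R2_not_field nonunit2P kerV2 x2 Vy2.
have e : V1 0 = V2 ((pbval y).2 * t) by rewrite rmorphM Vy2 mul0r rmorph0.
apply: (@rad_pow_dvd x y (pbpair e) n.+1 Ix); apply: pb_ext; rewrite pbvalX /=.
- by rewrite y1 expr0n !mul0r.
- by rewrite exprS ey mulrA.
Qed.

Lemma Pmax_sub_rad x y :
  I x -> (pbval x).1 != 0 -> (pbval x).2 != 0 -> Pmax y -> rad I y.
Proof.
move=> Ix x1 x2 Vy1; have Vy2 : V2 (pbval y).2 = 0 by rewrite -pbvalE.
have [n [t1 e1]] := residue_eq0_pow_dvd R1_PID R1_not_field nonunit1P kerV1 x1 Vy1.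
have [m [t2 e2]] := residue_eq0_pow_dvd R2_PID R2_not_field nonunit2P kerV2 x2 Vy2.
have e : V1 ((pbval y).1 ^+ m.+1 * t1) = V2 ((pbval y).2 ^+ n.+1 * t2).
  by rewrite !rmorphM !rmorphXn Vy1 Vy2 !expr0n !mul0r.
apply: (@rad_pow_dvd x y (pbpair e) (n + m).+1 Ix); apply: pb_ext; rewrite pbvalX /=.
- by rewrite -mulrA -e1 -exprD addSn addnC.
- by rewrite -mulrA -e2 -exprD addSn.
Qed.

Lemma ideal_fst_snd_neq0 x x' : I x -> I x' ->
  (pbval x).1 != 0 -> (pbval x').2 != 0 ->
  exists z, [/\ I z, (pbval z).1 != 0 & (pbval z).2 != 0].
Proof.
move=> Ix Ix' x1 x'2.
have [x2 | x2] := eqVneq (pbval x).2 0; last by exists x.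
have [x'1 | x'1] := eqVneq (pbval x').1 0; last by exists x'.
have [_ ID _] := I_ideal; exists (x + x'); split; first exact: ID.
- by rewrite /= x'1 addr0.
- by rewrite /= x2 add0r.
Qed.

End Radical.

Lemma proper_ideal_two_absorbing_primary (I : R -> Prop) :
  proper_ideal I -> two_absorbing_primary I.
Proof.
move=> I_proper; split => // a b c Iabc; have [I_ideal _] := I_proper.
have [I0 _ IM] := I_ideal; have I_rad z : I z -> rad I z by exists 1%N.
have [Pa | /not_Pmax_inv [d da]] := classic (Pmax a); last first.
  by apply/Or33/I_rad; rewrite -[b * c]mul1r -da -mulrA (mulrA a); apply: IM.
have fst0 : ~ (exists x, I x /\ (pbval x).1 != 0) -> (pbval (a * b * c)).1 = 0.
  by move=> no1; apply/eqP/(contra_notT _ no1) => ?; exists (a * b * c).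
have snd0 : ~ (exists x, I x /\ (pbval x).2 != 0) -> (pbval (a * b * c)).2 = 0.
  by move=> no2; apply/eqP/(contra_notT _ no2) => ?; exists (a * b * c).
have [[x [Ix x1]] | /fst0 abc1] := classic (exists x, I x /\ (pbval x).1 != 0);
  have [[x' [Ix' x'2]] | /snd0 abc2] := classic (exists x, I x /\ (pbval x).2 != 0).
- have [z [Iz z1 z2]] := ideal_fst_snd_neq0 I_ideal Ix Ix' x1 x'2.
  by apply/Or32/(Pmax_sub_rad I_ideal Iz z1 z2)/PmaxMr.
- case/mulf3_eq0: abc2 => ?; [apply: Or32 | apply: Or33];
    by apply: (rad_snd_eq0 I_ideal Ix x1).
- case/mulf3_eq0: abc1 => ?; [apply: Or32 | apply: Or33];
    by apply: (rad_fst_eq0 I_ideal Ix' x'2).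
have abc0 : a * b * c = 0 by apply: pb_ext.
by case: (pb_mul3_eq0 abc0) => ->; [apply: Or31 | apply/Or32/I_rad | apply/Or33/I_rad].
Qed.

Definition cyclic_submod (X : lmodType R) (v : X) : X -> Prop :=
  fun z => exists c : R, z = c *: v.

Definition is_cyclic (X : lmodType R) : Prop := exists v : X, forall m, cyclic_submod v m.

Section IdealMul.
Variables (X : lmodType R) (I : R -> Prop).

Lemma cyclic_submod_submodule (v : X) : is_submodule (cyclic_submod v).
Proof.
split.
- by exists 0; rewrite scale0r.
- by move=> _ _ [c ->] [d ->]; exists (c + d); rewrite scalerDl.
- by move=> r _ [c ->]; exists (r * c); rewrite scalerA.
Qed.

Lemma ideal_mul_term a (x : X) : I a -> ideal_mul I (a *: x).
Proof. by move=> Ia; exists 1%N, (fun=> a), (fun=> x); rewrite big_ord1. Qed.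

Lemma ideal_mul_ind (P : X -> Prop) m :
  P 0 -> (forall u v, P u -> P v -> P (u + v)) -> (forall a x, I a -> P (a *: x)) ->
  ideal_mul I m -> P m.
Proof. by move=> P0 PD PZ [n [r [x [Ir ->]]]]; apply: big_ind => // k _; apply: PZ. Qed.

Lemma ideal_mul_sub (J : R -> Prop) (m : X) :
  (forall r, I r -> J r) -> ideal_mul I m -> ideal_mul J m.
Proof. by move=> IJ [n [r [x [Ir ->]]]]; exists n, r, x; split=> // k; apply: IJ. Qed.

Lemma ideal_mul_submodule :
  (forall c r, I r -> I (c * r)) -> is_submodule (ideal_mul I : X -> Prop).
Proof.
move=> IM; split.
- by exists 0%N, (fun=> 0), (fun=> 0); rewrite big_ord0; split=> // [[]].
- move=> _ _ [n1 [r1 [x1 [Ir1 ->]]]] [n2 [r2 [x2 [Ir2 ->]]]].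
  exists (n1 + n2)%N, (fun k => match split k with inl i => r1 i | inr j => r2 j end).
  exists (fun k => match split k with inl i => x1 i | inr j => x2 j end).
  split; first by move=> k; case: split.
  rewrite big_split_ord; congr (_ + _); apply: eq_bigr => k _.
  - by have /= -> := @unsplitK n1 n2 (inl k).
  - by have /= -> := @unsplitK n1 n2 (inr k).
- move=> c _ [n [r [x [Ir ->]]]]; exists n, (fun k => c * r k), x.
  split; first by move=> k; apply: IM.
  by rewrite scaler_sumr; apply: eq_bigr => k _; rewrite scalerA.
Qed.

End IdealMul.

Lemma colon_ideal (X : lmodType R) (N : X -> Prop) :
  is_submodule N -> is_ideal (colon N).
Proof.
case=> N0 ND NZ; split.
- by move=> m; rewrite scale0r.
- by move=> r s Nr Ns m; rewrite scalerDl; apply: ND.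
- by move=> c r Nr m; rewrite -scalerA; apply: NZ.
Qed.

Lemma cyclic_pap_multiplication (X : lmodType R) : is_cyclic X -> pap_multiplication X.
Proof.
move=> [v gen] N [[N_sub _] _]; have [N0 ND NZ] := N_sub.
exists (colon N); split=> [|m]; first exact: colon_ideal.
split; last by apply: ideal_mul_ind => // a x; apply.
move=> Nm; have [r rv] := gen m; rewrite rv in Nm *; apply: ideal_mul_term => x.
by have [c ->] := gen x; rewrite scalerA mulrC -scalerA; apply: NZ.
Qed.

Lemma proper_submodule_pap (X : lmodType R) (N : X -> Prop) :
  proper_submodule N -> pseudo_absorbing_primary N.
Proof.
move=> [N_sub [m Nm]]; split; first by split=> //; exists m.
apply: proper_ideal_two_absorbing_primary; split; first exact: colon_ideal.
by move/(_ m); rewrite scale1r.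
Qed.

Lemma noncyclic_line_ideal (X : lmodType R) (m : X) :
  pap_multiplication X -> ~ is_cyclic X ->
  exists I, [/\ is_ideal I, ~ I 1 & forall z, cyclic_submod m z <-> ideal_mul I z].
Proof.
move=> pap ncyc; have [z mz] : exists z, ~ cyclic_submod m z.
  apply: NNPP => all_line; apply: ncyc; exists m => z.
  by apply: NNPP => mz; apply: all_line; exists z.
have m_proper : proper_submodule (cyclic_submod m).
  by split; [apply: cyclic_submod_submodule | exists z].
have [I [I_ideal lineE]] := pap _ (proper_submodule_pap m_proper).
exists I; split=> // I1; apply: mz; apply/lineE.
by rewrite -[z]scale1r; apply: ideal_mul_term.
Qed.

Lemma Pmax_fixed_eq0 (X : lmodType R) (m : X) q : Pmax q -> m = q *: m -> m = 0.
Proof.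
move=> Pq mq; have [d d1q] : exists d, d * (1 - q) = 1.
  by apply: not_Pmax_inv => P1q; apply: Pmax_not1; rewrite -(subrK q 1); apply: PmaxD.
by rewrite -[m]scale1r -d1q -scalerA scalerBl scale1r -mq subrr scaler0.
Qed.

(* A Nakayama argument with no finiteness: X = P X, hence m lies in
   I (P X) = P (I X) = P m, i.e. m = q m with 1 - q a unit. *)
Lemma lines_ideal_mul_eq0 (X : lmodType R) :
  (forall m : X, exists I,
     [/\ is_ideal I, ~ I 1 & forall z, cyclic_submod m z <-> ideal_mul I z]) ->
  forall m : X, m = 0.
Proof.
move=> lines; have PX (x : X) : ideal_mul Pmax x.
  have [I [I_ideal I1 lineE]] := lines x.
  apply: (ideal_mul_sub (fun r => proper_ideal_sub_Pmax (conj I_ideal I1))).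
  by apply/lineE; exists 1; rewrite scale1r.
move=> m; have [I [_ _ lineE]] := lines m.
pose Q z := exists q, Pmax q /\ z = q *: m.
have Q0 : Q 0 by exists 0; rewrite scale0r; split=> //; apply: Pmax0.
have QD u v : Q u -> Q v -> Q (u + v).
  move=> [q [Pq ->]] [q' [Pq' ->]]; exists (q + q').
  by rewrite scalerDl; split=> //; apply: PmaxD.
have mI : ideal_mul I m by apply/lineE; exists 1; rewrite scale1r.
have [q [Pq mq]] : Q m.
  apply: (ideal_mul_ind Q0 QD _ mI) => a x Ia.
  apply: (@ideal_mul_ind _ Pmax (fun z => Q (a *: z)) x _ _ _ (PX x)).
  - by rewrite scaler0.
  - by move=> u v Qu Qv; rewrite scalerDr; apply: QD.
  move=> s y Ps; rewrite scalerA mulrC -scalerA.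
  have [c ->] : cyclic_submod m (a *: y) by apply/lineE; apply: ideal_mul_term.
  by exists (s * c); rewrite scalerA; split=> //; apply: PmaxMr.
exact: Pmax_fixed_eq0 Pq mq.
Qed.

Lemma pap_multiplication_cyclic (X : lmodType R) : pap_multiplication X -> is_cyclic X.
Proof.
move=> pap; apply: NNPP => ncyc.
have X0 := lines_ideal_mul_eq0 (fun m => noncyclic_line_ideal m pap ncyc).
by apply: ncyc; exists 0 => m; exists 0; rewrite scale0r; apply: X0.
Qed.

Lemma pap_multiplicationP (X : lmodType R) : pap_multiplication X <-> is_cyclic X.
Proof. by split; [apply: pap_multiplication_cyclic | apply: cyclic_pap_multiplication]. Qed.

Lemma cyclic_surj (X Y : lmodType R) (f : {linear X -> Y}) :
  (forall y, exists x, f x = y) -> is_cyclic X -> is_cyclic Y.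
Proof.
move=> f_surj [v gen]; exists (f v) => y; have [x <-] := f_surj y.
by have [c ->] := gen x; exists c; rewrite linearZ.
Qed.

Lemma ideal_mul_qlift (X : lmodType R) (L : X -> Prop) (L_sub : is_submodule L)
    (I : R -> Prop) (q : quot L_sub) :
  ideal_mul I q -> exists y, ideal_mul I y /\ q = qproj L_sub y.
Proof.
case=> n [r [x [Ir ->]]]; exists (\sum_(k < n) r k *: sval (x k)).
split; first by exists n, r, (fun k => sval (x k)).
by rewrite linear_sum; apply: eq_bigr => k _; rewrite linearZ /= qprojK.
Qed.

Lemma quot_separated (X : lmodType R) (L : X -> Prop) (L_sub : is_submodule L) :
  (forall y1 y2, P1S y1 -> P2S y2 -> L (y1 - y2) -> L y1) -> separated (quot L_sub).
Proof.
move=> L_cut q /ideal_mul_qlift [y1 [P1y1 ->]] /ideal_mul_qlift [y2 [P2y2 /qproj_eq L12]].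
by rewrite -(linear0 (qproj L_sub)); apply/qproj_eq; rewrite subr0; apply: L_cut L12.
Qed.

Section SeparatedRepresentation.
Variables (S M : lmodType R) (phi : {linear S -> M}).
Hypothesis phi_rep : separated_representation phi.

Let S_sep : separated S := let: And3 h _ _ := phi_rep in h.
Let phi_surj : forall m, exists s, phi s = m := let: And3 _ h _ := phi_rep in h.
Let P1S_sub : is_submodule (P1S : S -> Prop) := ideal_mul_submodule S P1_0M.
Let P2S_sub : is_submodule (P2S : S -> Prop) := ideal_mul_submodule S O_P2M.

Section InducedMap.
Variables (L : S -> Prop) (L_sub : is_submodule L) (L_ker : forall x, L x -> phi x = 0).

(* As for [quot], [L_ker] is mentioned so that the linear instance below,
   whose proof needs it, can be attached to [quot_induced]. *)
Definition quot_induced : quot L_sub -> M := let _ := L_ker in fun q => phi (sval q).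

Lemma quot_inducedE x : quot_induced (qproj L_sub x) = phi x.
Proof.
apply/eqP; rewrite -subr_eq0 -linearB /=; apply/eqP/L_ker.
by rewrite -opprB; apply/(submodN L_sub)/(qrepP L_sub).
Qed.

Lemma quot_induced_linear : linear quot_induced.
Proof.
move=> a; elim/qind => x; elim/qind => y.
by rewrite -linearP !quot_inducedE linearP.
Qed.

HB.instance Definition _ :=
  GRing.isLinear.Build R (quot L_sub) M *:%R quot_induced quot_induced_linear.

End InducedMap.

Lemma separated_quot_ker_eq0 (L : S -> Prop) (L_sub : is_submodule L) :
  (forall x, L x -> phi x = 0) -> separated (quot L_sub) -> forall x, L x -> x = 0.
Proof.
move=> L_ker sep x Lx; have [_ _ phi_min] := phi_rep.
have qproj_inj := phi_min _ (qproj L_sub) (@quot_induced L L_sub L_ker) sep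
  (fun s => esym (quot_inducedE L_sub L_ker s)).
by apply: qproj_inj; rewrite linear0; apply/qproj_eq; rewrite subr0.
Qed.

Lemma ker_line_eq0 (v : S) :
  phi v = 0 -> separated (quot (cyclic_submod_submodule v)) -> v = 0.
Proof.
move=> phiv sep; apply: (separated_quot_ker_eq0 _ sep); last by exists 1; rewrite scale1r.
by move=> _ [c ->]; rewrite linearZ /= phiv scaler0.
Qed.

Lemma ker_separated_eq0 (v : S) : phi v = 0 -> P1S v \/ P2S v -> v = 0.
Proof.
move=> phiv Pv; apply: ker_line_eq0 => //.
apply: quot_separated => y1 y2 P1y1 P2y2 [c cv].
have [[_ _ P1Z] [_ P2D P2Z]] := (P1S_sub, P2S_sub).
case: Pv => Pv.
- suff -> : y1 = c *: v by exists c.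
  have P1y2 : P1S y2.
    have -> : y2 = y1 - c *: v by rewrite -cv opprB addrC subrK.
    by apply: (submodB P1S_sub) => //; apply: P1Z.
  by rewrite -cv (S_sep P1y2 P2y2) subr0.
- exists 0; rewrite scale0r; apply: S_sep P1y1 _.
  have -> : y1 = y2 + c *: v by rewrite -cv addrC subrK.
  by apply: P2D => //; apply: P2Z.
Qed.

Lemma ker_Pmax_scale_eq0 (k : S) r : phi k = 0 -> Pmax r -> r *: k = 0.
Proof.
move=> phik /Pmax_split [r1 [r2 [P1r1 P2r2 ->]]].
have phiZ r' : phi (r' *: k) = 0 by rewrite linearZ /= phik scaler0.
have r1k : r1 *: k = 0.
  by apply: ker_separated_eq0 (phiZ r1) _; left; apply: ideal_mul_term.
have r2k : r2 *: k = 0.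
  by apply: ker_separated_eq0 (phiZ r2) _; right; apply: ideal_mul_term.
by rewrite scalerDl r1k r2k addr0.
Qed.

(* If k were not in P1 S - P2 S, the quotient S / R k would be separated. *)
Lemma ker_sub_P1S_P2S (k : S) :
  phi k = 0 -> exists y1 y2, [/\ P1S y1, P2S y2 & k = y1 - y2].
Proof.
move=> phik; apply: NNPP => not_diff.
have [[P1S0 _ P1Z] [P2S0 _ P2Z]] := (P1S_sub, P2S_sub).
suff k0 : k = 0 by apply: not_diff; exists 0, 0; rewrite k0 subr0.
apply: ker_line_eq0 => //; apply: quot_separated => y1 y2 P1y1 P2y2 [c ck].
have [Pc | /not_Pmax_inv [d dc]] := classic (Pmax c).
  exists 0; rewrite scale0r; apply: S_sep P1y1 _.
  by move/eqP: ck; rewrite ker_Pmax_scale_eq0 // subr_eq0 => /eqP ->.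
case: not_diff; exists (d *: y1), (d *: y2); split; [exact: P1Z | exact: P2Z |].
by rewrite -scalerBr ck scalerA dc scale1r.
Qed.

Lemma ideal_mul_Pmax_sub_line (s0 : S) (I : R -> Prop) (y : S) :
  (forall m, exists c, m = c *: phi s0) -> (forall a, I a -> Pmax a) ->
  ideal_mul I y -> cyclic_submod s0 y.
Proof.
move=> gen IP; apply: ideal_mul_ind; have [_ sD sZ] := cyclic_submod_submodule s0.
- by exists 0; rewrite scale0r.
- exact: sD.
move=> a x Ia; have [c phix] := gen (phi x).
have phik : phi (x - c *: s0) = 0 by rewrite linearB linearZ /= phix subrr.
move/eqP: (ker_Pmax_scale_eq0 phik (IP a Ia)); rewrite scalerBr subr_eq0 => /eqP ->.
by exists (a * c); rewrite scalerA.
Qed.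

Lemma separated_rep_cyclic : is_cyclic M -> is_cyclic S.
Proof.
move=> [m0 gen]; have [s0 phis0] := phi_surj m0; rewrite -phis0 in gen.
exists s0 => s; have [r phis] := gen (phi s).
have phik : phi (s - r *: s0) = 0 by rewrite linearB linearZ /= phis subrr.
have [y1 [y2 [P1y1 P2y2 ky]]] := ker_sub_P1S_P2S phik.
have [c1 y1E] := ideal_mul_Pmax_sub_line gen P1_0_Pmax P1y1.
have [c2 y2E] := ideal_mul_Pmax_sub_line gen O_P2_Pmax P2y2.
by exists (c1 - c2 + r); rewrite scalerDl scalerBl -y1E -y2E -ky subrK.
Qed.

End SeparatedRepresentation.

End Pullback.

Theorem theorem4p2
  (R1 R2 : idomainType) (F : fieldType)
  (p1 : R1) (p2 : R2)
  (V1 : {rmorphism R1 -> F}) (V2 : {rmorphism R2 -> F})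
  (hR1 : is_DVR R1) (hR2 : is_DVR R2)
  (hP1 : forall x : R1, x \isn't a GRing.unit <-> principal_ideal p1 x)
  (hP2 : forall x : R2, x \isn't a GRing.unit <-> principal_ideal p2 x)
  (hV1surj : forall c : F, exists r : R1, V1 r = c)
  (hV2surj : forall c : F, exists r : R2, V2 r = c)
  (hV1ker : forall x : R1, V1 x = 0 <-> principal_ideal p1 x)
  (hV2ker : forall x : R2, V2 x = 0 <-> principal_ideal p2 x)
  (M S : lmodType (pullback V1 V2)) (phi : {linear S -> M})
  (hMns : ~ separated M)
  (hrep : separated_representation phi) :
  pap_multiplication M <-> pap_multiplication S.
Proof.
have [PID1 _ nf1] := hR1; have [PID2 _ nf2] := hR2.
have cyclicP X := pap_multiplicationP PID1 PID2 nf1 nf2 hP1 hP2 hV1ker hV2ker X.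
rewrite !cyclicP; split.
- exact: (separated_rep_cyclic hP1 hP2 hV1ker hV2ker hrep).
- by case: hrep => _ phi_surj _; apply: cyclic_surj phi_surj.
Qed.
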